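(* Assume (FWW) for a flow $\Phi_t$ on $\mathbb{R}^n$ and a $k$-cone $C$. Let $K\subset\mathbb{R}^n$ be a compact invariant set and let $\mathbb{R}^n=E_y\oplus F_y$, $y\in K$, be a $k$-exponential separation of $(\Phi_t,D\Phi_t)$ along $K$ associated with $C$. For $y\in K$ let $P_y$ be the projection onto $E_y$ along $F_y$ and $Q_y=I-P_y$. Then: (i) the projections $P_y$ and $Q_y$ are bounded uniformly in $y\in K$; (ii) there exists a constant $C_1>0$ such that if $v\in\mathbb{R}^n\setminus\{0\}$ satisfies $\|P_y(v)\|\ge C_1\|Q_y(v)\|$ for some $y\in K$, then $v\in\operatorname{Int}C$; (iii) for any $v\in C\setminus\{0\}$ there exists a constant $\delta_3>0$ such that $\|Q_y(v)\|\le\delta_3\|P_y(v)\|$ for every $y\in K$.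
   Context: A closed set $C\subset\mathbb{R}^n$ is a $k$-cone if $lv\in C$ for all $v\in C$, $l\in\mathbb{R}$, and the maximal dimension of a linear subspace contained in $C$ is $k$. $C$ is $k$-solid if there is a $k$-dimensional subspace $W$ with $W\setminus\{0\}\subset\operatorname{Int}C$. Write $x\sim y$ if $x-y\in C$ and $x\approx y$ if $x-y\in\operatorname{Int}C$. A flow $\Phi_t$ is strongly monotone with respect to a $k$-solid cone $C$ if $x\sim y$ implies $\Phi_t(x)\sim\Phi_t(y)$ for $t\ge0$, and $x\ne y$, $x\sim y$ imply $\Phi_t(x)\approx\Phi_t(y)$ for $t>0$. Assumption (FWW): the flow $\Phi_t$ on $\mathbb{R}^n$ is $C^{1,\alpha}$-smooth ($C^1$ with locally $\alpha$-Hölder derivative, $\alpha\in(0,1]$), strongly monotone with respect to the $k$-cone $C$, and $D_x\Phi_t(C\setminus\{0\})\subset\operatorname{Int}C$ for $t>0$. A $k$-exponential separation along a compact invariant set $K$ associated with $C$ consists of continuous (in the Grassmannian gap metric) families of $k$-dimensional subspaces $E_x$ and $(n-k)$-dimensional subspaces $F_x$, $x\in K$, such that: $\mathbb{R}^n=E_x\oplus F_x$; $D_x\Phi_tE_x=E_{\Phi_t(x)}$, $D_x\Phi_tF_x\subset F_{\Phi_t(x)}$ for $t>0$; there are $M>0$, $0<\gamma<1$ with $\|D_x\Phi_tw\|\le M\gamma^t\|D_x\Phi_tv\|$ for all $x\in K$, unit $w\in F_x$, unit $v\in E_x$, $t\ge0$; and $E_x\subset\operatorname{Int}C\cup\{0\}$,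 $F_x\cap C=\{0\}$. *)

(* MathComp-Analysis over an abstract R : realType.
   Vectors of R^n are row vectors 'rV[R]_n; linear subspaces are row spaces
   of square matrices 'M[R]_n (mxalgebra, scope %MS). *)
From HB Require Import structures.
From mathcomp Require Import all_boot all_order all_algebra.
From mathcomp Require Import all_classical all_reals all_analysis.
Set Implicit Arguments. Unset Strict Implicit. Unset Printing Implicit Defensive.
Import Order.TTheory GRing.Theory Num.Theory.
Import numFieldNormedType.Exports.
Local Open Scope classical_set_scope.
Local Open Scope ring_scope.

Section Defs.
Context {R : realType} {n : nat}.
Local Notation V := 'rV[R]_n.

Definition insp (v : V) (W : 'M[R]_n) : Prop := (v <= W)%MS.

Definition is_flow (Phi : R -> V -> V) : Prop :=
  (forall x, Phi 0 x = x) /\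
  (forall s t x, Phi (s + t) x = Phi s (Phi t x)) /\
  continuous (fun p : R * V => Phi p.1 p.2).

Definition C1alpha_flow (alpha : R) (Phi : R -> V -> V) : Prop :=
  (forall p : R * V, differentiable (fun q : R * V => Phi q.1 q.2) p) /\
  (forall w : R * V, continuous (fun p : R * V => 'd (fun q : R * V => Phi q.1 q.2) p w)) /\
  (forall t (x : V), differentiable (Phi t) x) /\
  (forall t (x0 : V), exists r : R, exists L : R, 0 < r /\ 0 <= L /\
     forall x y w : V, `|x - x0| < r -> `|y - x0| < r ->
       `|'d (Phi t) x w - 'd (Phi t) y w| <= L * (`|x - y| `^ alpha) * `|w|).

Definition subspace_in (W : 'M[R]_n) (C : set V) : Prop :=
  forall v, insp v W -> C v.

Definition k_cone (k : nat) (C : set V) : Prop :=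
  closed C /\
  (forall v (l : R), C v -> C (l *: v)) /\
  (exists W : 'M[R]_n, \rank W = k /\ subspace_in W C) /\
  (forall W : 'M[R]_n, subspace_in W C -> (\rank W <= k)%N).

Definition k_solid (k : nat) (C : set V) : Prop :=
  exists W : 'M[R]_n, \rank W = k /\
    forall v, insp v W -> v != 0 -> (interior C) v.

Definition cone_rel (C : set V) (x y : V) : Prop := C (x - y).
Definition cone_rel_int (C : set V) (x y : V) : Prop := (interior C) (x - y).

Definition strongly_monotone (Phi : R -> V -> V) (C : set V) : Prop :=
  (forall x y t, cone_rel C x y -> 0 <= t -> cone_rel C (Phi t x) (Phi t y)) /\
  (forall x y t, x != y -> cone_rel C x y -> 0 < t ->
     cone_rel_int C (Phi t x) (Phi t y)).

(* Assumption (FWW).  Strong monotonicity is defined w.r.t. a k-solid cone,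
   so k-solidity of C is part of the assumption. *)
Definition FWW (alpha : R) (Phi : R -> V -> V) (k : nat) (C : set V) : Prop :=
  0 < alpha /\ alpha <= 1 /\
  is_flow Phi /\ C1alpha_flow alpha Phi /\
  k_cone k C /\ k_solid k C /\
  strongly_monotone Phi C /\
  (forall t (x v : V), 0 < t -> C v -> v != 0 -> (interior C) ('d (Phi t) x v)).

Definition flow_invariant (Phi : R -> V -> V) (K : set V) : Prop :=
  forall t, Phi t @` K = K.

Definition dist_sp (v : V) (W : 'M[R]_n) : R :=
  inf [set `|v - w| | w in [set w | insp w W]].

Definition half_gap (U W : 'M[R]_n) : R :=
  sup [set dist_sp u W | u in [set u | insp u U /\ `|u| = 1]].

Definition gap (U W : 'M[R]_n) : R := Num.max (half_gap U W) (half_gap W U).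

Definition gap_continuous_on (K : set V) (E : V -> 'M[R]_n) : Prop :=
  forall x, K x -> forall eps : R, 0 < eps -> exists d : R, 0 < d /\
    forall y, K y -> `|x - y| < d -> gap (E x) (E y) < eps.

Definition exp_separation (Phi : R -> V -> V) (C : set V) (k : nat)
    (K : set V) (E F : V -> 'M[R]_n) : Prop :=
  gap_continuous_on K E /\ gap_continuous_on K F /\
  (forall x, K x -> \rank (E x) = k /\ \rank (F x) = (n - k)%N) /\
  (forall x, K x ->
     (forall v, exists e f, insp e (E x) /\ insp f (F x) /\ v = e + f) /\
     (forall v, insp v (E x) -> insp v (F x) -> v = 0)) /\
  (forall x t, K x -> 0 < t ->
     (forall v, insp v (E x) -> insp ('d (Phi t) x v) (E (Phi t x))) /\
     (forall w, insp w (E (Phi t x)) -> exists v, insp v (E x) /\ w = 'd (Phi t) x v) /\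
     (forall v, insp v (F x) -> insp ('d (Phi t) x v) (F (Phi t x)))) /\
  (exists M gamma : R, 0 < M /\ 0 < gamma /\ gamma < 1 /\
     forall x w v t, K x -> insp w (F x) -> `|w| = 1 -> insp v (E x) -> `|v| = 1 ->
       0 <= t -> `|'d (Phi t) x w| <= M * (gamma `^ t) * `|'d (Phi t) x v|) /\
  (forall x v, K x -> insp v (E x) -> v != 0 -> (interior C) v) /\
  (forall x v, K x -> insp v (F x) -> C v -> v = 0).

Definition projP (E F : V -> 'M[R]_n) (y v : V) : V := v *m proj_mx (E y) (F y).
Definition projQ (E F : V -> 'M[R]_n) (y v : V) : V := v - projP E F y v.

End Defs.

(* Gap continuity of E and F lets P_y v and Q_y v be approximated by
   vectors of E_x and F_x for y near x, which gives
   |P_x v - P_y v| <= eps (|P_y v| + |Q_y v|).  Compactness of K turns this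
   local estimate into the uniform bound (i), and then into continuity of
   y |-> P_y in operator norm.  For (iii), a vector of C \ {0} lies in no F_y,
   so |P_y v| > 0 is bounded below on K.  For (ii), the unit sphere of E_x is
   a compact subset of the open set Int C, hence every vector within a fixed
   relative distance of E_x \ {0} lies in Int C; a vector with |Q_y v| small
   compared to |P_y v| is such a vector for E_x whenever y is close to x. *)

From HB Require Import structures.
From mathcomp Require Import all_boot all_order all_algebra.
From mathcomp Require Import all_classical all_reals all_analysis.
From mathcomp Require Import lra.
Set Implicit Arguments. Unset Strict Implicit. Unset Printing Implicit Defensive.
Import Order.TTheory GRing.Theory Num.Theory.
Import numFieldNormedType.Exports.
Local Open Scope classical_set_scope.
Local Open Scope ring_scope.

Section MatrixNorm.
Context {R : realType}.

Lemma mx_norm_entry m p (A : 'M[R]_(m, p)) i j : `|A i j| <= `|A|.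
Proof.
by rewrite [leRHS]/Num.norm /= mx_normrE; apply/bigmax_geP; right; exists (i, j).
Qed.

Lemma mx_norm_le m p (A : 'M[R]_(m, p)) c :
  0 <= c -> (forall i j, `|A i j| <= c) -> `|A| <= c.
Proof.
move=> c0 Ac; rewrite [leLHS]/Num.norm /= mx_normrE.
by apply/bigmax_leP; split => // -[i j] _; apply: Ac.
Qed.

Lemma mulmx_norm_bound m p (A : 'M[R]_(m, p)) :
  exists2 M, 0 < M & forall v : 'rV_m, `|v *m A| <= M * `|v|.
Proof.
have sum_ge0 : 0 <= \sum_i \sum_j `|A i j|.
  by rewrite sumr_ge0 // => i _; rewrite sumr_ge0.
exists (1 + \sum_i \sum_j `|A i j|) => [|v]; first by rewrite ltr_pwDl.
apply: mx_norm_le => [|i j]; first by rewrite mulr_ge0 ?addr_ge0.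
rewrite (ord1 i) mxE; apply: le_trans (ler_norm_sum _ _ _) _.
apply: (@le_trans _ _ (\sum_l `|v| * `|A l j|)).
  by apply: ler_sum => l _; rewrite normrM ler_wpM2r // mx_norm_entry.
rewrite -mulr_sumr mulrC ler_wpM2r // (le_trans _ (ler_wpDl ler01 (lexx _))) //.
apply: ler_sum => l _.
by rewrite (bigD1 j) //= ler_wpDr // sumr_ge0.
Qed.

Lemma mulmx_continuous m p (A : 'M[R]_(m, p)) :
  continuous (fun v : 'rV[R]_m => v *m A).
Proof.
have [M M0 AM] := mulmx_norm_bound A.
apply: (@bounded_linear_continuous _ _ _ (@mulmxr _ 1 _ _ A)); apply/linear_boundedP.
apply: filterS (nbhs_pinfty_ge (gtr0_real M0)) => r Mr v.
by apply: le_trans (AM v) _; rewrite ler_wpM2r.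
Qed.

Lemma closed_row_space m p (W : 'M[R]_(p, m)) :
  closed [set v : 'rV[R]_m | (v <= W)%MS].
Proof.
have -> : [set v : 'rV[R]_m | (v <= W)%MS] =
    (fun v => `|v *m cokermx W|) @^-1` [set x | x = 0].
  by apply/seteqP; split => v /=; rewrite submxE;
    [move/eqP ->; rewrite normr0 | move/eqP; rewrite normr_eq0].
apply: preimage_closed => [v _|]; last exact: closed_eq.
exact/continuous_comp/norm_continuous/mulmx_continuous.
Qed.

Lemma compact_row_space_sphere m p (W : 'M[R]_(p, m)) :
  compact [set v : 'rV[R]_m | (v <= W)%MS /\ `|v| = 1].
Proof.
apply: bounded_closed_compact.
  by exists 1; split => // M M1 v [_ v1] /=; rewrite v1 ltW.
apply: closedI; first exact: closed_row_space.
apply: (@preimage_closed _ _ (fun v : 'rV[R]_m => `|v|) [set x | x = 1]).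
  by move=> v _; apply: norm_continuous.
exact: closed_eq.
Qed.

End MatrixNorm.

Section Compactness.
Context {R : realType}.

Lemma compact_near_pinfty {T : topologicalType} (K : set T) (P : T -> R -> Prop) :
  compact K ->
  (forall x, K x ->
    exists M0, \forall y \near x, K y -> forall M, M0 < M -> P y M) ->
  exists2 M, 0 < M & forall y, K y -> P y M.
Proof.
move=> /compact_near_coveringP/near_covering_withinP cK loc.
have [|M M0 KP] := pinfty_ex_gt0 (cK R (pinfty_nbhs R) (fun M y => P y M) _ _).
  move=> x /loc [M0 nearP].
  exists ([set y | K y -> forall M, M0 < M -> P y M], [set M | M0 < M]).
    by split; [exact: nearP | exact: nbhs_pinfty_gt (num_real M0)].
  by case=> y M /= [yP ltM] Ky; apply: yP.
by exists M.
Qed.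

Lemma compact_interior_uniform_ball {U : normedModType R} (A S : set U) :
  compact A -> A `<=` interior S ->
  exists2 r, 0 < r & forall a w, A a -> `|a - w| < r -> S w.
Proof.
move=> cA AS.
have [|M M0 AM] := compact_near_pinfty
    (P := fun a M => forall w, `|a - w| < M^-1 -> S w) cA.
  move=> a0 /AS /nbhs_ballP [rho /= rho0 ballS]; exists (2 / rho).
  have rho20 : 0 < rho / 2 by rewrite divr_gt0.
  near=> a => _ M ltM w aw; apply: ballS; rewrite -ball_normE /=.
  have : ball a0 (rho / 2) a by near: a; exact: nbhsx_ballx.
  rewrite -ball_normE /= => a0a.
  have M0 : 0 < M by apply: lt_trans ltM; rewrite divr_gt0.
  have Mrho : M^-1 < rho / 2 by rewrite -[rho / 2]invf_div ltf_pV2 ?posrE ?divr_gt0.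
  rewrite -(subrK a a0) -addrA (splitr rho); apply: le_lt_trans (ler_normD _ _) _.
  by rewrite ltrD // (lt_trans aw).
by exists M^-1 => [|a w Aa]; [rewrite invr_gt0 | apply: AM].
Unshelve. all: by end_near. Qed.

End Compactness.

Lemma cone_interior_near_row_space {R : realType} m p (C : set 'rV[R]_m)
    (W : 'M[R]_(p, m)) :
  (forall v l, C v -> C (l *: v)) ->
  (forall v, (v <= W)%MS -> v != 0 -> interior C v) ->
  exists2 eta, 0 < eta &
    forall u w, (u <= W)%MS -> u != 0 -> `|u - w| < eta * `|u| -> interior C w.
Proof.
move=> Cscale WC.
have [|r r0 sphereC] := compact_interior_uniform_ball (S := C)
    (compact_row_space_sphere (W := W)).
  by move=> u [uW u1]; apply: WC; rewrite // -normr_eq0 u1 oner_neq0.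
exists (r / 2) => [|u w uW u0 uw]; first by rewrite divr_gt0.
have a0 : 0 < `|u| by rewrite normr_gt0.
apply/nbhs_ballP; exists (r / 2 * `|u|) => [|z]; first by rewrite /= !mulr_gt0.
rewrite -ball_normE /= => wz.
rewrite -[z]scale1r -(mulfV (lt0r_neq0 a0)) -scalerA; apply: Cscale.
apply: (sphereC (`|u|^-1 *: u)).
  by split; [rewrite scalemx_sub | rewrite normrZ normfV normr_id mulVf ?gt_eqF].
rewrite -scalerBr normrZ normfV normr_id ltr_pdivrMl // mulrC.
have -> : u - z = (u - w) + (w - z) by rewrite addrA subrK.
rewrite [r](splitr r) mulrDl.
by apply: le_lt_trans (ler_normD _ _) _; rewrite ltrD.
Qed.

Section Gap.
Context {R : realType} {n : nat}.
Local Notation V := 'rV[R]_n.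
Implicit Types (U W : 'M[R]_n) (u w : V).

Lemma dist_sp_le u w W : insp w W -> dist_sp u W <= `|u - w|.
Proof. by move=> wW; apply: ge_inf; [exists 0 => _ [? _ <-] | exists w]. Qed.

Lemma dist_sp_adherent u W eps :
  0 < eps -> exists2 w, insp w W & `|u - w| < dist_sp u W + eps.
Proof.
move=> eps0; have infE : has_inf [set `|u - w| | w in [set w | insp w W]].
  by split; [exists `|u - 0|, 0; [exact: sub0mx | by []] | exists 0 => _ [? _ <-]].
by have [_ [w wW <-]] := inf_adherent eps0 infE; exists w.
Qed.

Lemma dist_sp_le_half_gap u U W :
  insp u U -> `|u| = 1 -> dist_sp u W <= half_gap U W.
Proof.
move=> uU u1; apply: ub_le_sup; last by exists u.
exists 1 => _ [v [_ v1] <-]; rewrite -v1 -[v in `|v|]subr0.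
by apply: dist_sp_le; exact: sub0mx.
Qed.

Lemma half_gap_approx U W eps u :
  half_gap U W < eps -> insp u U -> exists2 w, insp w W & `|u - w| <= eps * `|u|.
Proof.
move=> gapUW uU; have [->|u0] := eqVneq u 0.
  by exists 0; [exact: sub0mx | rewrite subr0 normr0 mulr0].
have a0 : 0 < `|u| by rewrite normr_gt0.
set u1 := `|u|^-1 *: u.
have u1_unit : `|u1| = 1 by rewrite normrZ normfV normr_id mulVf ?gt_eqF.
have du1 : dist_sp u1 W < eps.
  by apply: le_lt_trans gapUW; apply: dist_sp_le_half_gap => //; exact: scalemx_sub.
have /(dist_sp_adherent u1 W) [w wW u1w] : 0 < eps - dist_sp u1 W.
  by rewrite subr_gt0.
exists (`|u| *: w); first exact: scalemx_sub.
have -> : u - `|u| *: w = `|u| *: (u1 - w).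
  by rewrite scalerBr scalerA mulfV ?gt_eqF ?scale1r.
rewrite normrZ normr_id mulrC ler_wpM2r //; apply: ltW.
by move: u1w; rewrite addrCA subrr addr0.
Qed.

Lemma gap_approx U W eps u :
  gap U W < eps -> insp u W -> exists2 w, insp w U & `|u - w| <= eps * `|u|.
Proof. by rewrite /gap gt_max => /andP[_]; apply: half_gap_approx. Qed.

Lemma gap_continuous_near (K : set V) (E : V -> 'M[R]_n) x eps :
  gap_continuous_on K E -> K x -> 0 < eps ->
  \forall y \near x, K y -> gap (E x) (E y) < eps.
Proof.
move=> gE Kx eps0; have [d [d0 dE]] := gE x Kx eps eps0.
by apply/nbhs_ballP; exists d => // y; rewrite -ball_normE /= => xy Ky; apply: dE.
Qed.

End Gap.

Section Projections.
Context {R : realType} {n : nat}.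
Local Notation V := 'rV[R]_n.
Variables (K : set V) (E F : V -> 'M[R]_n).
Hypothesis gapE : gap_continuous_on K E.
Hypothesis gapF : gap_continuous_on K F.
Hypothesis EF_compl : forall y, K y ->
  (forall v, exists e f, insp e (E y) /\ insp f (F y) /\ v = e + f) /\
  (forall v, insp v (E y) -> insp v (F y) -> v = 0).

Local Notation P := (projP E F).
Local Notation Q := (projQ E F).

Lemma projP_sub y v : insp (P y v) (E y).
Proof. exact: proj_mx_sub. Qed.

Lemma projQ_sub y v : K y -> insp (Q y v) (F y).
Proof.
move=> Ky; apply: proj_mx_compl_sub.
by have [e [f [eE [fF ->]]]] := (EF_compl Ky).1 v; apply: addmx_sub_adds.
Qed.

Lemma projP_id y e f : K y -> insp e (E y) -> insp f (F y) -> P y (e + f) = e.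
Proof.
move=> Ky eE fF; have capEF : (E y :&: F y = 0)%MS.
  by apply/eqP/rowV0P => v; rewrite sub_capmx => /andP[]; apply: (EF_compl Ky).2.
by rewrite /projP mulmxDl proj_mx_id // proj_mx_0 // addr0.
Qed.

Lemma projP_near x eps : K x -> 0 < eps ->
  \forall y \near x, K y ->
    forall v, `|P x v - P y v| <= eps * (`|P y v| + `|Q y v|).
Proof.
move=> Kx eps0; have [Mx Mx0 PxM] := mulmx_norm_bound (proj_mx (E x) (F x)).
set d := eps / (1 + Mx).
have d0 : 0 < d by rewrite divr_gt0 // addr_gt0.
have epsE : eps = d * (1 + Mx) by rewrite /d divfK // gt_eqF // addr_gt0.
near=> y => Ky v.
have gapEy : gap (E x) (E y) < d by move: Ky; near: y; exact: gap_continuous_near.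
have gapFy : gap (F x) (F y) < d by move: Ky; near: y; exact: gap_continuous_near.
set e := P y v; set f := Q y v.
have [e' e'E ee'] := gap_approx gapEy (projP_sub y v).
have [f' f'F ff'] := gap_approx gapFy (projQ_sub v Ky).
set w := (e - e') + (f - f').
have -> : P x v - e = w *m proj_mx (E x) (F x) - (e - e').
  have -> : v = (e' + f') + w.
    by rewrite /w addrACA (subrKC e') (subrKC f') /f /e /projQ subrKC.
  by rewrite /projP mulmxDl -/(P x _) projP_id // addrAC opprB addrC.
have wd : `|w| <= d * (`|e| + `|f|).
  by apply: le_trans (ler_normD _ _) _; rewrite mulrDr lerD.
rewrite epsE; apply: le_trans (ler_normB _ _) _.
have := ler_wpM2l (ltW Mx0) wd; have := PxM w.
have := mulr_ge0 (ltW d0) (normr_ge0 f); lra.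
Unshelve. all: by end_near. Qed.

Hypothesis compactK : compact K.

Lemma projP_bounded :
  exists2 M, 0 < M & forall y, K y -> forall v, `|P y v| <= M * `|v|.
Proof.
apply: compact_near_pinfty compactK _ => x Kx.
have [Mx Mx0 PxM] := mulmx_norm_bound (proj_mx (E x) (F x)).
exists (2 * Mx + 1); near=> y => Ky M ltM v.
have Pxy : `|P x v - P y v| <= 4^-1 * (`|P y v| + `|Q y v|).
  by move: Ky v; near: y; apply: projP_near.
have Pxv : `|P x v| <= Mx * `|v| := PxM v.
have := ler_normB (P x v) (P x v - P y v); rewrite opprB subrKC.
have := ler_normB v (P y v); have := ler_wpM2r (normr_ge0 v) (ltW ltM).
rewrite /projQ in Pxy; have := normr_ge0 v; lra.
Unshelve. all: by end_near. Qed.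

Lemma proj_bounded : exists2 M, 0 < M &
  forall y v, K y -> `|P y v| <= M * `|v| /\ `|Q y v| <= M * `|v|.
Proof.
have [M M0 PM] := projP_bounded; exists (M + 1) => [|y v Ky]; first exact: addr_gt0.
have := PM y Ky v; have := ler_normB v (P y v); have := normr_ge0 v.
rewrite /projQ; split; lra.
Qed.

Lemma projP_continuous x eps : K x -> 0 < eps ->
  \forall y \near x, K y -> forall v, `|P x v - P y v| <= eps * `|v|.
Proof.
move=> Kx eps0; have [M M0 PQM] := proj_bounded.
have M20 : 0 < 2 * M by rewrite mulr_gt0.
near=> y => Ky v.
have Pxy : `|P x v - P y v| <= eps / (2 * M) * (`|P y v| + `|Q y v|).
  by move: Ky v; near: y; apply: projP_near; rewrite ?divr_gt0.
have pq : `|P y v| + `|Q y v| <= 2 * M * `|v| by have [PM QM] := PQM y v Ky; lra.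
apply: le_trans Pxy (le_trans (ler_wpM2l _ pq) _); first by rewrite divr_ge0 ?ltW.
by rewrite mulrA divfK ?gt_eqF.
Unshelve. all: by end_near. Qed.

Lemma projP_bounded_below v : (forall y, K y -> P y v != 0) ->
  exists2 c, 0 < c & forall y, K y -> c <= `|P y v|.
Proof.
move=> Pv0.
have [|M M0 PM] :=
  compact_near_pinfty (P := fun y M => 1 <= M * `|P y v|) compactK.
  move=> x Kx; set a := `|P x v|.
  have a0 : 0 < a by rewrite normr_gt0 Pv0.
  have v0 : 0 < `|v|.
    by rewrite normr_gt0; apply: contraNneq (Pv0 x Kx) => ->; rewrite /projP mul0mx.
  exists (2 / a); near=> y => Ky M ltM.
  have Pxy : `|P x v - P y v| <= a / 2 / `|v| * `|v|.
    move: Ky; near: y; apply: filterS (projP_continuous Kx _) => [y yP Ky|].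
      exact: yP.
    by rewrite !divr_gt0.
  rewrite divfK ?gt_eqF // in Pxy.
  have Pyv : a / 2 <= `|P y v|.
    by have := lerB_dist (P x v) (P y v); rewrite -/a; lra.
  have M0 : 0 < M by apply: lt_trans ltM; rewrite divr_gt0.
  have Ma : 2 < M * a by rewrite -ltr_pdivrMr.
  have := ler_wpM2l (ltW M0) Pyv; lra.
by exists M^-1 => [|y Ky]; rewrite ?invr_gt0 // -[M^-1]mulr1 ler_pdivrMl // PM.
Unshelve. all: by end_near. Qed.

Lemma proj_dominant_interior (C : set V) :
  (forall v l, C v -> C (l *: v)) ->
  (forall y v, K y -> insp v (E y) -> v != 0 -> interior C v) ->
  exists2 C1, 0 < C1 &
    forall y, K y -> forall v, v != 0 -> C1 * `|Q y v| <= `|P y v| -> interior C v.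
Proof.
move=> Cscale EC; apply: compact_near_pinfty compactK _ => x Kx.
have [eta eta0 etaC] := cone_interior_near_row_space Cscale (EC x ^~ Kx).
have eta1 : 0 < 1 + eta by rewrite addr_gt0.
set eps := eta / 4 / (1 + eta).
have epsE : (1 + eta) * eps = eta / 4 by rewrite mulrC divfK ?gt_eqF.
exists (4 * (1 + eta) / eta); near=> y => Ky M ltM.
have Pxy : forall v, `|P x v - P y v| <= eps * (`|P y v| + `|Q y v|).
  by move: Ky; near: y; apply: projP_near; rewrite // divr_gt0 ?mulr_gt0.
move=> v v0 Mqp.
(* With p = |P_y v|, q = |Q_y v| and d = |P_x v - P_y v| we have
   (1 + eta) d <= eta (p + q) / 4 and 4 (1 + eta) q <= eta p,
   hence d + q < eta (p - d). *)
have key : `|P x v - v| < eta * `|P x v|.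
  have F4 : 4 * (1 + eta) < M * eta by rewrite -ltr_pdivrMr.
  have nv0 : 0 < `|v| by rewrite normr_gt0.
  have vPQ : `|v| <= `|P y v| + `|Q y v|.
    by rewrite -[v in `|v|](subrKC (P y v)); apply: ler_normD.
  have PxvB : `|P x v - v| <= `|P x v - P y v| + `|Q y v|.
    have -> : P x v - v = (P x v - P y v) - Q y v by rewrite /projQ opprB subrKA.
    exact: ler_normB.
  have PyvB := lerB_dist (P y v) (P x v); rewrite distrC in PyvB.
  have := ler_wpM2l (ltW eta1) (Pxy v); rewrite mulrA epsE.
  have := ler_wpM2l (ltW eta0) Mqp; have := ler_wpM2l (ltW eta0) vPQ.
  have := ler_wpM2r (normr_ge0 (Q y v)) (ltW F4).
  have := ler_wpM2l (ltW eta0) PyvB.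
  have := mulr_gt0 eta0 nv0; have := mulr_ge0 (ltW eta0) (normr_ge0 (Q y v)).
  lra.
apply: (etaC (P x v)); [exact: projP_sub | | exact: key].
by apply: contraTneq key => ->; rewrite normr0 mulr0 ltNge normr_ge0.
Unshelve. all: by end_near. Qed.

End Projections.

Theorem lemma3p5 (R : realType) (n k : nat) (alpha : R)
  (Phi : R -> 'rV[R]_n -> 'rV[R]_n) (C : set 'rV[R]_n)
  (K : set 'rV[R]_n) (E F : 'rV[R]_n -> 'M[R]_n) :
  FWW alpha Phi k C ->
  compact K -> flow_invariant Phi K ->
  exp_separation Phi C k K E F ->
  (* (i) *)
  (exists M : R, 0 < M /\ forall y v, K y ->
     `|projP E F y v| <= M * `|v| /\ `|projQ E F y v| <= M * `|v|) /\
  (* (ii) *)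
  (exists C1 : R, 0 < C1 /\ forall (v y : 'rV[R]_n), v != 0 -> K y ->
     C1 * `|projQ E F y v| <= `|projP E F y v| -> (interior C) v) /\
  (* (iii) *)
  (forall v, C v -> v != 0 -> exists delta3 : R, 0 < delta3 /\
     forall y, K y -> `|projQ E F y v| <= delta3 * `|projP E F y v|).
Proof.
move=> [_ [_ [_ [_ [[_ [Cscale _]] _]]]]] cK _ [gE [gF [_ [EF [_ [_ [EC FC]]]]]]].
have [M M0 PQM] := proj_bounded gE gF EF cK.
split; first by exists M.
split.
  have [C1 C10 C1C] := proj_dominant_interior gE gF EF cK Cscale EC.
  by exists C1; split => // v y v0 Ky; apply: C1C.
move=> v Cv v0.
have [|c c0 cP] := projP_bounded_below gE gF EF cK (v := v).
  move=> y Ky; apply: contra_neq v0 => Pv0.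
  by have := projQ_sub EF v Ky; rewrite /projQ Pv0 subr0 => /FC; apply.
have delta0 : 0 < M * `|v| / c by rewrite divr_gt0 ?mulr_gt0 ?normr_gt0.
exists (M * `|v| / c); split => // y Ky; apply: le_trans (PQM y v Ky).2 _.
rewrite -[leLHS](divfK (lt0r_neq0 c0)); apply: ler_wpM2l; [exact: ltW | exact: cP].
Qed.
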